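(* Define $b(n)$ by $\sum_{n\ge1}b(n)q^n=-q(q^2;q)_\infty$. Then for every positive integer $n$, $$b(n)=\begin{cases}0, & \text{if } R(\lceil n\rceil_p)\text{ is positive},\\ -1, & \text{if } R(\lceil n\rceil_p)\text{ is odd and negative},\\ 1, & \text{if } R(\lceil n\rceil_p)\text{ is even and negative}.\end{cases}$$
   Context: $(z;q)_\infty=\prod_{j\ge0}(1-zq^j)$. $\mathcal{P}=\{m(3m+1)/2:m\in\mathbb{Z}\}$ is the set of (generalized) pentagonal numbers; for $n=m(3m+1)/2\in\mathcal{P}$ put $R(n)=m$ (well defined). $\lceil n\rceil_p$ is the smallest element of $\mathcal{P}$ that is $\ge n$. *)

From mathcomp Require Import all_boot all_order all_algebra.
Set Implicit Arguments. Unset Strict Implicit. Unset Printing Implicit Defensive.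
Import Order.TTheory GRing.Theory Num.Theory.
Local Open Scope ring_scope.

(* Generalized pentagonal number m(3m+1)/2 (the division is exact). *)
Definition pent (m : int) : int := ((m * (3 * m + 1)) %/ 2)%Z.

(* Truncation of the formal power series -q (q^2;q)_oo = -q prod_{j>=0} (1 - q^(j+2)):
   factors with j+2 > N do not affect coefficients of q^k for k <= N. *)
Definition gen_trunc (N : nat) : {poly int} :=
  - 'X * \prod_(j < N) (1 - 'X^(j.+2)).

Definition b (n : nat) : int := (gen_trunc n)`_n.

(* Shanks' finite form of Euler's pentagonal theorem,
     sum_(k <= n) (-1)^k (x^(k+1); x)_(n-k) x^(nk + k(k+1)/2)
       = 1 + sum_(1 <= k <= n) (-1)^k (x^(k(3k-1)/2) + x^(k(3k+1)/2)),
   follows by induction on n from a telescoping sum, and shows that (q; q)_n agrees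
   with the pentagonal series up to degree n.  Since (1 - q) (q^2; q)_oo = (q; q)_oo,
   b(n) = -[q^(n-1)] (q^2; q)_oo is minus the sum of the coefficients of (q; q)_oo
   below q^n, i.e. minus the sum of the signs (-1)^k of the pentagonal numbers
   pent(+-k) < n.  These interleave as pent 0 < pent (-1) < pent 1 < pent (-2) < ...,
   so that sum is determined by the least pentagonal number >= n. *)

From mathcomp Require Import all_boot all_order all_algebra.
From mathcomp Require Import ring zify.
Import Order.TTheory GRing.Theory Num.Theory.
Local Open Scope ring_scope.

Lemma bin2S k : 'C(k.+1, 2) = ('C(k, 2) + k)%N.
Proof. by rewrite binS bin1. Qed.

Lemma bin2_double k : ('C(k.+1, 2) * 2 = k.+1 * k)%N.
Proof. by elim: k => [//|k IH]; rewrite bin2S; lia. Qed.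

(* [pentn k = pent (- k) = k(3k-1)/2] and [pentp k = pent k = k(3k+1)/2], written
   without division. *)
Definition pentn (k : nat) : nat := (k * k + 'C(k, 2))%N.
Definition pentp (k : nat) : nat := (k * k + 'C(k.+1, 2))%N.

Lemma pentp_pentn k : pentp k = (pentn k + k)%N.
Proof. by rewrite /pentp /pentn bin2S addnA. Qed.

Lemma pentnS k : pentn k.+1 = (pentp k + k.*2.+1)%N.
Proof. rewrite /pentp /pentn; lia. Qed.

Lemma pent_pentp k : pent k%:Z = (pentp k)%:Z.
Proof.
have pentp_double : (k * (3 * k + 1) = pentp k * 2)%N.
  by case: k => [//|k]; rewrite /pentp mulnDl bin2_double; lia.
by rewrite /pent (_ : _ * _ = (pentp k)%:Z * 2) ?mulzK //; lia.
Qed.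

Lemma pent_pentn k : pent (- k%:Z) = (pentn k)%:Z.
Proof.
have pentn_double : (k * (3 * k) = pentn k * 2 + k)%N.
  by case: k => [//|k]; rewrite /pentn mulnDl bin2_double; lia.
by rewrite /pent (_ : _ * _ = (pentn k)%:Z * 2) ?mulzK //; lia.
Qed.

Lemma leq_pentn : {mono pentn : j k / (j <= k)%N}.
Proof.
apply: leq_mono; apply: (homo_ltn ltn_trans) => i.
by rewrite pentnS pentp_pentn; lia.
Qed.

Lemma leq_pentp : {mono pentp : j k / (j <= k)%N}.
Proof.
apply: leq_mono; apply: (homo_ltn ltn_trans) => i.
by rewrite [pentp i.+1]pentp_pentn pentnS; lia.
Qed.

Lemma ltn_pentn : {mono pentn : j k / (j < k)%N}.
Proof. exact: leqW_mono leq_pentn. Qed.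

Lemma ltn_pentp : {mono pentp : j k / (j < k)%N}.
Proof. exact: leqW_mono leq_pentp. Qed.

Lemma ltn_pentn_pentp j k : (0 < j)%N -> (pentn j < pentp k)%N = (j <= k)%N.
Proof.
move=> j_gt0; case: (leqP j k) => [le_jk | lt_kj].
  by move: le_jk; rewrite -leq_pentp [pentp j]pentp_pentn; lia.
by move: lt_kj; rewrite -leq_pentn pentnS; lia.
Qed.

Lemma ltn_pentp_pentn j k : (pentp j < pentn k)%N = (j < k)%N.
Proof.
case: (ltnP j k) => [lt_jk | le_kj].
  by move: lt_jk; rewrite -leq_pentn pentnS; lia.
by move: le_kj; rewrite -leq_pentn pentp_pentn; lia.
Qed.

Lemma leq_id_pentn k : (k <= pentn k)%N.
Proof. by rewrite /pentn; nia. Qed.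

Section Shanks.

Variables (R : comPzRingType) (x : R).

Definition qprod (k n : nat) : R := \prod_(k <= i < n) (1 - x ^+ i.+1).

Definition pentagonal_sum (n : nat) : R :=
  1 + \sum_(1 <= k < n.+1) (-1) ^+ k * (x ^+ pentn k + x ^+ pentp k).

Definition shanks_sum (n : nat) : R :=
  \sum_(0 <= k < n.+1) (-1) ^+ k * qprod k n * x ^+ (n * k + 'C(k.+1, 2)).

Lemma shanks_sumS n :
  shanks_sum n.+1 = shanks_sum n + (-1) ^+ n.+1 * (x ^+ pentn n.+1 + x ^+ pentp n.+1).
Proof.
(* The factor 1 - x^(n+1) of each term for n+1 splits off a telescoping correction v. *)
pose v k := if k is j.+1 then (-1) ^+ j * qprod j n * x ^+ ('C(j.+1, 2) + n.+1 * j.+1) else 0.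
have termS k : (k < n.+1)%N ->
    (-1) ^+ k * qprod k n.+1 * x ^+ (n.+1 * k + 'C(k.+1, 2)) =
    (-1) ^+ k * qprod k n * x ^+ (n * k + 'C(k.+1, 2)) - (v k.+1 - v k).
  move=> lt_kn.
  have -> : qprod k n.+1 = qprod k n * (1 - x ^+ n.+1) by rewrite /qprod big_nat_recr.
  case: k lt_kn => [_ | j lt_jn]; first by rewrite /v !muln0 muln1 add0n exprD; ring.
  rewrite /v; have -> : qprod j n = (1 - x ^+ j.+1) * qprod j.+1 n by rewrite /qprod big_ltn.
  set e := (n * j.+1 + 'C(j.+1, 2))%N.
  rewrite (_ : (n.+1 * j.+1 + 'C(j.+2, 2) = e + j.+1 + j.+1)%N);
    last by rewrite /e !bin2S; lia.
  rewrite (_ : (n * j.+1 + 'C(j.+2, 2) = e + j.+1)%N); last by rewrite /e bin2S; lia.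
  rewrite (_ : ('C(j.+2, 2) + n.+1 * j.+2 = e + j.+1 + j.+1 + n.+1)%N);
    last by rewrite /e !bin2S; lia.
  rewrite (_ : ('C(j.+1, 2) + n.+1 * j.+1 = e + j.+1)%N); last by rewrite /e; lia.
  clearbody e; rewrite !exprD [(-1) ^+ j.+1]exprS; ring.
rewrite /shanks_sum big_nat_recr //= (eq_big_nat _ _ (fun k kn => termS k (proj2 (andP kn)))).
have qprod_nn k : qprod k k = 1 by rewrite /qprod big_geq.
rewrite sumrB telescope_sumr // /v !qprod_nn.
rewrite (_ : ('C(n.+1, 2) + n.+1 * n.+1 = pentn n.+1)%N); last by rewrite /pentn bin2S; lia.
rewrite (_ : (n.+1 * n.+1 + 'C(n.+2, 2) = pentp n.+1)%N) // exprS; ring.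
Qed.

Lemma shanks_identity n : shanks_sum n = pentagonal_sum n.
Proof.
elim: n => [|n IH].
  rewrite /shanks_sum /pentagonal_sum big_nat1 big_geq // /qprod big_geq //.
  by rewrite addr0 mulr1 mul1r.
by rewrite shanks_sumS IH /pentagonal_sum [in RHS]big_nat_recr //= addrA.
Qed.

End Shanks.

Arguments qprod {R}.
Arguments pentagonal_sum {R}.

Lemma coef_eq_sum_mul1BX (R : nzRingType) (p : {poly R}) k :
  p`_k = \sum_(j < k.+1) ((1 - 'X) * p)`_j.
Proof.
elim: k => [|k IH]; first by rewrite big_ord1 mulrBl mul1r coefB coefXM subr0.
by rewrite big_ord_recr /= -IH mulrBl mul1r coefB coefXM /= addrC subrK.
Qed.

Section PolynomialCoefficients.

Context {R : comNzRingType}.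

Lemma coef_qprodX N i :
  (i <= N)%N -> (qprod ('X : {poly R}) 0 N)`_i = (pentagonal_sum 'X N)`_i.
Proof.
move=> le_iN; rewrite -shanks_identity /shanks_sum big_ltn //= muln0 expr0 mulr1 mul1r.
(* every term with k > 0 is divisible by X^(N+1) *)
rewrite (_ : \sum_(1 <= k < N.+1) _ = \sum_(1 <= k < N.+1)
    (-1) ^+ k * qprod 'X k N * 'X^(N * k + 'C(k.+1, 2) - N.+1) * 'X^(N.+1)).
  by rewrite -mulr_suml coefD coefMXn ltnS le_iN addr0.
apply: eq_big_nat => k /andP[k_gt0 _]; rewrite -[RHS]mulrA -exprD subnK //.
by case: k k_gt0 => // k _; rewrite bin2S mulnS; lia.
Qed.

Lemma sum_coefXn n a : \sum_(j < n) ('X^a : {poly R})`_j = (a < n)%:R.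
Proof.
elim: n => [|n IH]; first by rewrite big_ord0.
rewrite big_ord_recr /= IH coefXn ltnS.
by case: ltngtP; rewrite ?addr0 ?add0r.
Qed.

Lemma sum_coef_pentagonal_sum N n :
  \sum_(j < n) (pentagonal_sum ('X : {poly R}) N)`_j =
  (0 < n)%:R + \sum_(1 <= k < N.+1) (-1) ^+ k * ((pentn k < n)%:R + (pentp k < n)%:R).
Proof.
rewrite /pentagonal_sum; under eq_bigr do rewrite coefD coef_sum.
rewrite big_split /=; congr (_ + _); first by rewrite -(sum_coefXn n 0) expr0.
rewrite exchange_big /=.
apply: eq_bigr => k _; rewrite -!sum_coefXn -big_split mulr_sumr /=.
by apply: eq_bigr => j _; rewrite -(rmorph_sign (@polyC R)) coefCM coefD.
Qed.

End PolynomialCoefficients.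

Lemma b_pentagonal n : (0 < n)%N ->
  b n = - (1 + \sum_(1 <= k < n.+2) (-1) ^+ k * ((pentn k < n)%:R + (pentp k < n)%:R)).
Proof.
case: n => [//|n] _.
have qprod_split : qprod ('X : {poly int}) 0 n.+2 = (1 - 'X) * \prod_(j < n.+1) (1 - 'X^(j.+2)).
  by rewrite /qprod big_ltn // big_add1 /= big_mkord expr1.
rewrite /b /gen_trunc mulNr coefN coefXM /= coef_eq_sum_mul1BX -qprod_split.
rewrite -(sum_coef_pentagonal_sum n.+2 n.+1).
by congr (- _); apply: eq_bigr => j _; rewrite coef_qprodX //; have := ltn_ord j; lia.
Qed.

Lemma sum_sign (R : pzRingType) a : \sum_(1 <= k < a.+1) (-1) ^+ k = - (odd a)%:R :> R.
Proof.
elim: a => [|a IH]; first by rewrite big_geq ?oppr0.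
rewrite big_nat_recr //= IH -signr_odd /=.
by case: (odd a); rewrite /= ?mulr1n ?mulr0n ?oppr0 ?add0r ?addNr.
Qed.

Lemma sum_sign_prefix (R : pzRingType) N a : (a <= N)%N ->
  \sum_(1 <= k < N.+1) (-1) ^+ k * (k <= a)%:R = - (odd a)%:R :> R.
Proof.
move=> le_aN; rewrite -sum_sign [RHS](big_nat_widen _ _ N.+1) // big_mkcondr /=.
by apply: eq_bigr => k _; rewrite mulr_natr mulrb ltnS.
Qed.

Lemma b_pentagonal_counts n a c : (0 < n)%N ->
  (forall k, (0 < k)%N -> (pentn k < n)%N = (k <= a)%N) ->
  (forall k, (pentp k < n)%N = (k <= c)%N) ->
  b n = (odd a)%:R + (odd c)%:R - 1.
Proof.
move=> n_gt0 pentn_lt pentp_lt.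
have le_a : (a <= n.+1)%N.
  case: a pentn_lt => // a pentn_lt.
  by have := pentn_lt a.+1 isT; rewrite leqnn; have := leq_id_pentn a.+1; lia.
have le_c : (c <= n.+1)%N by have := pentp_lt c; rewrite leqnn pentp_pentn; lia.
rewrite b_pentagonal // (eq_big_nat _ _ (F2 := fun k =>
  (-1) ^+ k * (k <= a)%:R + (-1) ^+ k * (k <= c)%:R)); last first.
  by move=> k /andP[k_gt0 _]; rewrite pentn_lt // pentp_lt mulrDr.
by rewrite big_split /= !sum_sign_prefix //; lia.
Qed.

Lemma lt_least_above {d} {T : orderType d} {I : Type} {f : I -> T} {x : T} {m : I} :
  (x <= f m)%O -> (forall i, (x <= f i)%O -> (f m <= f i)%O) ->
  forall i, (f i < x)%O = (f i < f m)%O.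
Proof.
move=> le_x_fm fm_least i; apply/idP/idP => [lt_fi_x | lt_fi_fm].
  exact: lt_le_trans lt_fi_x le_x_fm.
by rewrite ltNge; apply: contraTN lt_fi_fm => /fm_least; rewrite leNgt.
Qed.

Theorem lemma5p3 (n : nat) (m : int) :
  (0 < n)%N ->
  (n%:Z <= pent m) ->
  (forall m' : int, n%:Z <= pent m' -> pent m <= pent m') ->
  b n = (if 0 < m then 0 else if odd `|m|%N then -1 else 1).
Proof.
move=> n_gt0 le_n_pent pent_least.
have lt_n_pent := lt_least_above (f := pent) le_n_pent pent_least.
have ltn_pentn_n k : (pentn k < n)%N = ((pentn k)%:Z < pent m).
  by rewrite -ltz_nat -pent_pentn lt_n_pent.
have ltn_pentp_n k : (pentp k < n)%N = ((pentp k)%:Z < pent m).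
  by rewrite -ltz_nat -pent_pentp lt_n_pent.
case: m {le_n_pent pent_least lt_n_pent} ltn_pentn_n ltn_pentp_n
  => [[|k] | j] ltn_pentn_n ltn_pentp_n.
- by have := ltn_pentp_n 0; rewrite (pent_pentp 0) ltxx n_gt0.
- rewrite (b_pentagonal_counts _ k.+1 k n_gt0) /=.
  + by case: (odd k); rewrite ?subrr ?addrK.
  + by move=> i i_gt0; rewrite ltn_pentn_n pent_pentp ltz_nat ltn_pentn_pentp.
  + by move=> i; rewrite ltn_pentp_n pent_pentp ltz_nat ltn_pentp.
- rewrite (b_pentagonal_counts _ j j n_gt0) /=.
  + by case: (odd j).
  + by move=> i _; rewrite ltn_pentn_n NegzE pent_pentn ltz_nat ltn_pentn.
  + by move=> i; rewrite ltn_pentp_n NegzE pent_pentn ltz_nat ltn_pentp_pentn.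
Qed.
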